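(* Let $n,m>3$ be integers and let $\psi$ be an automorphism of $\mathcal{CSR}(m,n)$. For every vertex $\xi$ of $\mathcal{CSR}(m,n)$ and every $a\neq b$ in $[m]$, there exist a vertex $\varsigma$ of $\mathcal{CSR}(m,n)$ and $p,q\in[m]$ (with $p\neq q$) such that $\psi(\xi+S_{ab})=\varsigma+S_{pq}$.
   Context: For positive integers $m,n$, the cyclic simplicial rook graph $\mathcal{CSR}(m,n)$ is the graph whose vertices are the vectors $(a_1,\dots,a_m)\in\mathbb{Z}_n^m$ with $a_1+\cdots+a_m\equiv 0 \pmod n$, two vertices being adjacent if and only if their vectors differ in exactly two coordinates. $[m]=\{1,\dots,m\}$; $e_i\in\mathbb{Z}_n^m$ is the vector with $1$ in coordinate $i$ and $0$ elsewhere; for distinct $a,b\in[m]$, $S_{ab}=\{\alpha(e_a-e_b)\mid \alpha\in\mathbb{Z}_n\}$; and $x+A=\{x+y\mid y\in A\}$. *)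

From HB Require Import structures.
From mathcomp Require Import all_boot all_order all_algebra.
Set Implicit Arguments. Unset Strict Implicit. Unset Printing Implicit Defensive.
Import GRing.Theory.
Local Open Scope ring_scope.

(* Vectors of Z_n^m, indexed by 'I_m (coordinate i+1 of the paper is index i).
   'Z_n is Z/nZ for n >= 2 (the theorem assumes n > 3). *)
Definition zvec (m n : nat) := {ffun 'I_m -> 'Z_n}.

Definition is_csr_vertex (m n : nat) (x : zvec m n) : bool := \sum_i x i == 0.
Definition csr_vertex (m n : nat) := {x : zvec m n | is_csr_vertex x}.

Definition csr_adj (m n : nat) (x y : csr_vertex m n) : bool :=
  #|[set i : 'I_m | val x i != val y i]| == 2%N.

Definition csr_automorphism (m n : nat) (psi : csr_vertex m n -> csr_vertex m n) : Prop :=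
  bijective psi /\ forall x y, csr_adj (psi x) (psi y) = csr_adj x y.

Definition unitv (m n : nat) (i : 'I_m) : zvec m n := [ffun j => (j == i)%:R].

Definition csr_coset (m n : nat) (xi : csr_vertex m n) (a b : 'I_m) : {set csr_vertex m n} :=
  [set v : csr_vertex m n |
     [exists alpha : 'Z_n,
        val v == [ffun j => val xi j + alpha * (unitv n a j - unitv n b j)]]].

(* The coset xi + S_ab is the line through the edge
   {xi, xi + (e_a - e_b)}.  For a common neighbour z of adjacent vertices x, y
   we describe, by adjacency alone, when z lies on the line through x and y
   ([line_like]): every common neighbour of x and y that is neither z nor
   adjacent to z shares at least five neighbours with z, and the common
   neighbours of x, y, z form a clique.  On the line this holds because a common
   neighbour of x and y off the line differs from z in exactly three
   coordinates.  Off the line, z = x + al (e_a - e_c) up to symmetry, and a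
   fourth coordinate k (this is where m > 3 is used) gives either two
   non-adjacent common neighbours of x, y, z (if 2 al = 0) or a common neighbour
   of x and y sharing at most four neighbours with z.  An automorphism preserves
   [line_like], hence maps the line through xi into the line through the images
   of two of its points, and both lines have n points. *)

From mathcomp Require Import all_boot all_order all_algebra ring.
Set Implicit Arguments. Unset Strict Implicit. Unset Printing Implicit Defensive.
Import GRing.Theory.
Local Open Scope ring_scope.

Section Graph.
Variables (T : finType) (e : rel T).

Definition common_nbrs (u v : T) : {set T} := [set w | e w u && e w v].

Definition line_like (x y z : T) : Prop :=
  (forall q, e q x -> e q y -> q != z -> ~~ e q z -> (5 <= #|common_nbrs z q|)%N) /\
  (forall q1 q2, e q1 x -> e q1 y -> e q1 z -> e q2 x -> e q2 y -> e q2 z ->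
     q1 != q2 -> e q1 q2).

Lemma line_like_iso (f : T -> T) x y z : bijective f ->
  (forall u v, e (f u) (f v) = e u v) -> line_like x y z -> line_like (f x) (f y) (f z).
Proof.
case=> g fK gK f_adj; have adj_g u v : e (g u) v = e u (f v) by rewrite -f_adj gK.
have card_nbrs u v : #|common_nbrs (f u) (f v)| = #|common_nbrs u v|.
  rewrite -[RHS](card_imset _ (can_inj fK)); congr #|pred_of_set _|; apply/setP=> w.
  by rewrite -[w]gK mem_imset ?inE ?f_adj //; apply: can_inj fK.
case=> many_nbrs nbrs_clique; split=> [q qx qy qz qNz | q1 q2].
  rewrite -[q]gK card_nbrs; apply: many_nbrs; rewrite ?adj_g //.
  by apply: contra_neq qz => <-; rewrite gK.
move=> q1x q1y q1z q2x q2y q2z q12; rewrite -[q1]gK -[q2]gK f_adj.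
by apply: nbrs_clique; rewrite ?adj_g ?(inj_eq (can_inj gK)).
Qed.

End Graph.

Lemma card_set3 (T : finType) (i j k : T) :
  i != j -> i != k -> j != k -> #|[set i; j; k]| = 3%N.
Proof. by move=> ij ik jk; rewrite -setUA cardsU1 cards2 jk !inE negb_or ij ik. Qed.

Section Moves.
Variables m n : nat.
Local Notation V := (csr_vertex m n).
Implicit Types (u v w x y z : V) (i j k l r s : 'I_m) (al be : 'Z_n).

Lemma vertex_sum0 u : \sum_i val u i = 0.
Proof. by apply/eqP; case: u. Qed.

Lemma vertex_ext u v : (forall i, val u i = val v i) -> u = v.
Proof. by move=> uv; apply/val_inj/ffunP. Qed.

Definition diff_coords u v : {set 'I_m} := [set i | val u i != val v i].

Lemma diff_coordsC u v : diff_coords u v = diff_coords v u.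
Proof. by apply/setP=> i; rewrite !inE eq_sym. Qed.

Lemma mem_diff_coords u v i : (i \in diff_coords u v) = (val u i != val v i).
Proof. by rewrite inE. Qed.

Lemma eq_off_diff_coords u v i : i \notin diff_coords u v -> val u i = val v i.
Proof. by rewrite inE negbK => /eqP. Qed.

Lemma csr_adjE u v : csr_adj u v = (#|diff_coords u v| == 2%N).
Proof. by []. Qed.

Lemma csr_adjC u v : csr_adj u v = csr_adj v u.
Proof. by rewrite !csr_adjE diff_coordsC. Qed.

Lemma sum_sub_supp u v (s : seq 'I_m) : uniq s ->
  (forall l, l \notin s -> val u l = val v l) -> \sum_(l <- s) (val u l - val v l) = 0.
Proof.
move=> s_uniq uv; have : \sum_l (val u l - val v l) = 0.
  by rewrite sumrB !vertex_sum0 subrr.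
rewrite (bigID (mem s)) /= [X in _ + X]big1 ?addr0 => [|l /uv ->]; last exact: subrr.
by rewrite big_uniq.
Qed.

Lemma sub_pair_sum0 u v r s : r != s ->
  (forall l, l != r -> l != s -> val u l = val v l) ->
  (val u r - val v r) + (val u s - val v s) = 0.
Proof.
move=> rs uv; rewrite -[RHS](@sum_sub_supp u v [:: r; s]) ?big_cons ?big_nil ?addr0 //=.
  by rewrite inE rs.
by move=> l; rewrite !inE negb_or => /andP[]; apply: uv.
Qed.

Definition move_vec (u : zvec m n) i j al : zvec m n :=
  [ffun l => u l + al * (unitv n i l - unitv n j l)].

Lemma move_vec_vertex u i j al : is_csr_vertex (move_vec (val u) i j al).
Proof.
rewrite /is_csr_vertex; under eq_bigr do rewrite ffunE.
rewrite big_split /= vertex_sum0 add0r -mulr_sumr sumrB.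
suff unit_sum k : \sum_l unitv n k l = 1 by rewrite !unit_sum subrr mulr0.
rewrite (bigD1 k) //= big1 => [|l /negbTE lk]; by rewrite ffunE ?eqxx ?lk ?addr0.
Qed.

Definition move u i j al : V := exist _ (move_vec (val u) i j al) (move_vec_vertex u i j al).

Lemma moveE u i j al l :
  val (move u i j al) l = val u l + al * ((l == i)%:R - (l == j)%:R).
Proof. by rewrite /= !ffunE. Qed.

Lemma move0 u i j : move u i j 0 = u.
Proof. by apply: vertex_ext => l; rewrite moveE mul0r addr0. Qed.

Lemma move_id u i al : move u i i al = u.
Proof. by apply: vertex_ext => l; rewrite moveE subrr mulr0 addr0. Qed.

Lemma moveN u i j al : move u i j (- al) = move u j i al.
Proof. by apply: vertex_ext => l; rewrite !moveE; ring. Qed.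

Lemma moveD u i j al be : move (move u i j al) i j be = move u i j (al + be).
Proof. by apply: vertex_ext => l; rewrite !moveE; ring. Qed.

Lemma moveC u i j k l al be :
  move (move u i j al) k l be = move (move u k l be) i j al.
Proof. by apply: vertex_ext => r; rewrite !moveE; ring. Qed.

Lemma move_trans u i j k al : move (move u i j al) j k al = move u i k al.
Proof. by apply: vertex_ext => l; rewrite !moveE; ring. Qed.

Lemma move_src u i j al : i != j -> val (move u i j al) i = val u i + al.
Proof. by move=> /negbTE ij; rewrite moveE eqxx ij subr0 mulr1. Qed.

Lemma move_dst u i j al : i != j -> val (move u i j al) j = val u j - al.
Proof. by rewrite eq_sym => /negbTE ji; rewrite moveE eqxx ji sub0r mulrN1. Qed.

Lemma move_off u i j al l : l != i -> l != j -> val (move u i j al) l = val u l.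
Proof. by move=> /negbTE li /negbTE lj; rewrite moveE li lj subrr mulr0 addr0. Qed.

Lemma csr_cosetP x i j v :
  reflect (exists al, v = move x i j al) (v \in csr_coset x i j).
Proof.
rewrite inE; apply: (iffP existsP) => -[al vE]; exists al; last by rewrite vE.
exact/val_inj/eqP.
Qed.

Lemma card_csr_coset x i j : i != j -> #|csr_coset x i j| = #|'Z_n|.
Proof.
move=> ij; have -> : csr_coset x i j = move x i j @: [set: 'Z_n].
  by apply/setP=> v; apply/csr_cosetP/imsetP => -[al]; [|move=> _]; exists al.
rewrite card_imset ?cardsT // => al be /(congr1 (fun w : V => val w i)).
by rewrite !move_src // => /addrI.
Qed.

Lemma agree_off2_move x u i j al : i != j ->
  (forall l, l != i -> l != j -> val u l = val x l) -> val u i = val x i + al ->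
  u = move x i j al.
Proof.
move=> ij ux ui; apply: vertex_ext => l.
case: (eqVneq l i) => [->|li]; first by rewrite move_src.
case: (eqVneq l j) => [->|lj]; last by rewrite move_off ?ux.
move/eqP: (sub_pair_sum0 ij ux); rewrite addr_eq0 ui addrC addKr => /eqP ->.
by rewrite move_dst // opprK addrC subrK.
Qed.

Lemma move_neq u i j al l : i != j -> al != 0 ->
  (val (move u i j al) l != val u l) = (l == i) || (l == j).
Proof.
move=> ij al0; case: (eqVneq l i) => [->|li].
  by rewrite move_src // -subr_eq0 addrAC subrr add0r.
case: (eqVneq l j) => [->|lj]; last by rewrite move_off ?eqxx.
by rewrite move_dst // -subr_eq0 addrAC subrr add0r oppr_eq0.
Qed.

Lemma diff_coords_move u i j al : i != j -> al != 0 ->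
  diff_coords (move u i j al) u = [set i; j].
Proof. by move=> ij al0; apply/setP=> l; rewrite !inE move_neq. Qed.

Lemma adj_move u i j al : i != j -> al != 0 -> csr_adj (move u i j al) u.
Proof. by move=> ij al0; rewrite csr_adjE diff_coords_move // cards2 ij. Qed.

Lemma adj_of_diff2 u v r s : r != s -> val u r != val v r -> val u s != val v s ->
  (forall l, l != r -> l != s -> val u l = val v l) -> csr_adj u v.
Proof.
move=> rs ur us uv; rewrite csr_adjE (_ : diff_coords u v = [set r; s]) ?cards2 ?rs //.
apply/setP=> l; rewrite !inE.
case: (eqVneq l r) => [->//|lr]; case: (eqVneq l s) => [->//|ls].
by rewrite uv ?eqxx.
Qed.

Lemma csr_adjP u v : csr_adj u v ->
  exists i j al, [/\ i != j, al != 0 & v = move u i j al].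
Proof.
rewrite csr_adjC csr_adjE => /cards2P[i [j [ij Dvu]]].
have agree l : l != i -> l != j -> val v l = val u l.
  by move=> li lj; apply: eq_off_diff_coords; rewrite Dvu !inE negb_or li.
exists i, j, (val v i - val u i); split => //.
  have : i \in diff_coords v u by rewrite Dvu !inE eqxx.
  by rewrite inE subr_eq0.
by apply: agree_off2_move ij agree _; rewrite addrC subrK.
Qed.

Lemma csr_coset_adj x i j v w : i != j ->
  v \in csr_coset x i j -> w \in csr_coset x i j -> v != w -> csr_adj v w.
Proof.
move=> ij /csr_cosetP[al ->] /csr_cosetP[be ->] vw.
rewrite -[al](subrKC be) -moveD adj_move // subr_eq0.
by apply: contra_neq vw => ->.
Qed.

Lemma not_adj_diff3 u v i j k : i != j -> i != k -> j != k ->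
  val u i != val v i -> val u j != val v j -> val u k != val v k ->
  ~~ csr_adj u v /\ u != v.
Proof.
move=> ij ik jk ui uj uk.
have : [set i; j; k] \subset diff_coords u v.
  by apply/subsetP=> l; rewrite !inE -!orbA => /or3P[] /eqP ->.
move/subset_leq_card; rewrite card_set3 // csr_adjE => card_diff; split.
  by apply: contraTN card_diff => /eqP ->.
by apply: contra_neq ui => ->.
Qed.

Lemma adj_other_diff u v c : csr_adj u v -> val u c != val v c ->
  exists2 d, d != c & forall l, l != c -> (val u l != val v l) = (l == d).
Proof.
rewrite csr_adjE => /cards2P[r [s [rs Duv]]] uvc.
have : c \in diff_coords u v by rewrite inE.
have uvE l : (val u l != val v l) = (l == r) || (l == s).
  by rewrite -mem_diff_coords Duv !inE.
rewrite Duv !inE => /orP[] /eqP ->; [exists s; rewrite 1?eq_sym // | exists r => //];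
  by move=> l /negbTE lc; rewrite uvE lc ?orbF.
Qed.

Lemma common_nbr_off_coset x q a b al : a != b -> al != 0 ->
  csr_adj q x -> csr_adj q (move x a b al) -> q \notin csr_coset x a b ->
  exists c, [/\ c != a, c != b & q = move x a c al \/ q = move x c b al].
Proof.
set y := move x a b al => ab al0 qx qy qNL.
have [c /and3P[ca cb qcx]] : exists c, [&& c != a, c != b & val q c != val x c].
  apply/existsP; apply: contraR qNL => /existsPn agree; apply/csr_cosetP.
  exists (val q a - val x a); apply: agree_off2_move => [//|l la lb|]; last first.
    by rewrite subrKC.
  by apply/eqP; move: (agree l); rewrite la lb /= negbK.
exists c; split => //.
have [d1 d1c Dqx] := adj_other_diff qx qcx.
have [d2 d2c Dqy] : exists2 d, d != c &
    forall l, l != c -> (val q l != val y l) = (l == d).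
  by apply: adj_other_diff qy _; rewrite move_off.
have yx l : (val x l != val y l) = (l == a) || (l == b) by rewrite eq_sym move_neq.
have ac : a != c by rewrite eq_sym.
have bc : b != c by rewrite eq_sym.
case: (eqVneq (val q a) (val x a)) => [qa|qa].
  have d2a : d2 = a by apply/eqP; rewrite eq_sym -Dqy // qa yx eqxx.
  have qb : val q b = val y b.
    by apply/eqP/negbFE; rewrite Dqy // d2a eq_sym (negbTE ab).
  have d1b : d1 = b by apply/eqP; rewrite eq_sym -Dqx // qb eq_sym yx eqxx orbT.
  right; rewrite -moveN; apply: (agree_off2_move bc); last by rewrite qb move_dst.
  by move=> l lb lc; apply/eqP/negbFE; rewrite Dqx // d1b (negbTE lb).
have d1a : d1 = a by apply/eqP; rewrite eq_sym -Dqx.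
have qb : val q b = val x b.
  by apply/eqP/negbFE; rewrite Dqx // d1a eq_sym (negbTE ab).
have d2b : d2 = b by apply/eqP; rewrite eq_sym -Dqy // qb yx eqxx orbT.
left; apply: (agree_off2_move ac).
  by move=> l la lc; apply/eqP/negbFE; rewrite Dqx // d1a (negbTE la).
by rewrite -(move_src x al ab); apply/eqP/negbFE; rewrite Dqy // d2b (negbTE ab).
Qed.

End Moves.

Section Lines.
Variables m n : nat.
Local Notation V := (csr_vertex m n).
Implicit Types (u v w x y z : V) (i j k l r s : 'I_m) (al be : 'Z_n).
Local Notation common_nbrs := (common_nbrs (@csr_adj m n)).
Local Notation line_like := (line_like (@csr_adj m n)).

Lemma diff3_common_nbr u v p r t : p != r -> p != t -> r != t ->
  diff_coords u v = [set p; r; t] ->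
  exists w, [/\ w \in common_nbrs u v, val w p = val v p, val w r != val v r,
    val w r != val u r & val w t = val u t].
Proof.
move=> pr pt rt Duv; set w := move u p r (val v p - val u p); exists w.
have uvE l : (val u l != val v l) = [|| l == p, l == r | l == t].
  by rewrite -mem_diff_coords Duv !inE orbA.
have dp0 : val v p - val u p != 0 by rewrite subr_eq0 eq_sym uvE eqxx.
have sum3 : (val v p - val u p) + (val v r - val u r) + (val v t - val u t) = 0.
  rewrite -addrA -(@sum_sub_supp m n v u [:: p; r; t]) ?big_cons ?big_nil ?addr0 //=.
    by rewrite !inE negb_or pr pt rt.
  by move=> l; rewrite !inE -uvE negbK => /eqP.
have wr : val w r = val u r - (val v p - val u p) by rewrite move_dst.
have wr_v : val w r != val v r.
  apply: contra_neq (_ : val v t != val u t) => [wrv|]; last by rewrite eq_sym uvE eqxx !orbT.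
  apply/eqP; rewrite -subr_eq0 -sum3 -wrv wr; apply/eqP; ring.
have wp : val w p = val v p by rewrite move_src // subrKC.
have wt : val w t = val u t by rewrite move_off // eq_sym.
split; rewrite ?move_neq ?eqxx ?orbT //.
rewrite inE adj_move //=; apply: (adj_of_diff2 rt wr_v); first by rewrite wt uvE eqxx !orbT.
move=> l lr lt; case: (eqVneq l p) => [->//|lp].
by rewrite move_off //; apply/eqP/negbFE; rewrite uvE (negbTE lp) (negbTE lr) (negbTE lt).
Qed.

Lemma neq_at u v l : val u l != val v l -> u != v.
Proof. by apply: contra_neq => ->. Qed.

Lemma card_common_nbrs_diff3 u v i j k : i != j -> i != k -> j != k ->
  diff_coords u v = [set i; j; k] -> (5 <= #|common_nbrs u v|)%N.
Proof.
(* Five of the six vertices u + (v_p - u_p) (e_p - e_r), with p != r in {i, j, k}. *)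
move=> ij ik jk Dijk.
have [ji ki kj] : [/\ j != i, k != i & k != j] by split; rewrite eq_sym.
have Djik : diff_coords u v = [set j; i; k] by rewrite Dijk (setUC [set i]).
have Dikj : diff_coords u v = [set i; k; j] by rewrite Dijk setUAC.
have Dkij : diff_coords u v = [set k; i; j] by rewrite Dikj (setUC [set i]).
have Djki : diff_coords u v = [set j; k; i] by rewrite Djik setUAC.
have [uvi uvj uvk] : [/\ val u i != val v i, val u j != val v j & val u k != val v k].
  by rewrite -!mem_diff_coords Dijk !inE !eqxx !orbT.
have [w1 [w1N w1i w1j w1j' w1k]] := diff3_common_nbr ij ik jk Dijk.
have [w2 [w2N w2j w2i w2i' w2k]] := diff3_common_nbr ji jk ik Djik.
have [w3 [w3N w3i w3k w3k' w3j]] := diff3_common_nbr ik ij kj Dikj.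
have [w4 [w4N w4k w4i w4i' w4j]] := diff3_common_nbr ki kj ij Dkij.
have [w5 [w5N w5j w5k w5k' w5i]] := diff3_common_nbr jk ji ki Djki.
have n12 : w1 != w2 by apply: (neq_at (l := i)); rewrite w1i eq_sym.
have n13 : w1 != w3 by apply: (neq_at (l := j)); rewrite w3j.
have n14 : w1 != w4 by apply: (neq_at (l := i)); rewrite w1i eq_sym.
have n15 : w1 != w5 by apply: (neq_at (l := i)); rewrite w1i w5i eq_sym.
have n23 : w2 != w3 by apply: (neq_at (l := j)); rewrite w2j w3j eq_sym.
have n24 : w2 != w4 by apply: (neq_at (l := j)); rewrite w2j w4j eq_sym.
have n25 : w2 != w5 by apply: (neq_at (l := i)); rewrite w5i.
have n34 : w3 != w4 by apply: (neq_at (l := i)); rewrite w3i eq_sym.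
have n35 : w3 != w5 by apply: (neq_at (l := i)); rewrite w3i w5i eq_sym.
have n45 : w4 != w5 by apply: (neq_at (l := k)); rewrite w4k eq_sym.
have w_uniq : uniq [:: w1; w2; w3; w4; w5].
  by rewrite /= !inE !negb_or n12 n13 n14 n15 n23 n24 n25 n34 n35 n45.
apply: leq_trans (eq_leq (esym (card_uniqP w_uniq))) (subset_leq_card _).
by apply/subsetP => w; rewrite !in_cons in_nil orbF => /or4P[| | | /orP[]] /eqP ->.
Qed.

Lemma diff4_common_nbr u v w : #|diff_coords u v| = 4%N -> w \in common_nbrs u v ->
  exists r s, [/\ r != s, r \in diff_coords u v, s \in diff_coords u v,
    (val v r - val u r) + (val v s - val u s) = 0 & w = move u r s (val v r - val u r)].
Proof.
move=> card_uv; rewrite inE csr_adjC !csr_adjE => /andP[/eqP card_uw /eqP card_wv].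
have sub_uv : diff_coords u v \subset diff_coords u w :|: diff_coords w v.
  apply/subsetP => l; rewrite !inE; apply: contraR; rewrite negb_or !negbK.
  by case/andP => /eqP -> /eqP ->.
have [le_uwv disj] := leq_card_setU (diff_coords u w) (diff_coords w v).
have {}disj : [disjoint diff_coords u w & diff_coords w v].
  rewrite -disj eqn_leq le_uwv card_uw card_wv.
  by apply: leq_trans (subset_leq_card sub_uv); rewrite card_uv.
have /cards2P[r [s [rs Duw]]] := introT eqP card_uw.
have v_at l : l \in diff_coords u w -> val w l = val v l.
  by move=> l_uw; apply: eq_off_diff_coords; rewrite (disjointFr disj l_uw).
have rD : r \in diff_coords u w by rewrite Duw !inE eqxx.
have sD : s \in diff_coords u w by rewrite Duw !inE eqxx orbT.
have agree l : l != r -> l != s -> val w l = val u l.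
  by move=> lr ls; apply/esym/eq_off_diff_coords; rewrite Duw !inE negb_or lr.
exists r, s; split => //.
- by have := rD; rewrite !inE (v_at r rD).
- by have := sD; rewrite !inE (v_at s sD).
- by rewrite -(v_at r rD) -(v_at s sD); exact: sub_pair_sum0 rs agree.
- by apply: (agree_off2_move rs agree); rewrite v_at // subrKC.
Qed.

Lemma card_common_nbrs_move2 u i j k l al :
  i != j -> i != k -> i != l -> j != k -> j != l -> k != l -> al + al != 0 ->
  (#|common_nbrs u (move (move u i j al) k l al)| <= 4)%N.
Proof.
set v := move _ k l al => ij ik il jk jl kl al2.
have al0 : al != 0 by apply: contra_neq al2 => ->; rewrite addr0.
have dE r : val v r - val u r =
    if r \in [set i; k] then al else if r \in [set j; l] then - al else 0.
  rewrite !moveE !inE; have [->|ri] := eqVneq r i.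
    by rewrite (negbTE ij) (negbTE ik) (negbTE il) /=; ring.
  have [->|rk] := eqVneq r k; first by rewrite (negbTE kl) eq_sym (negbTE jk) /=; ring.
  have [->|rj] := eqVneq r j; first by rewrite (negbTE jl) /=; ring.
  by have [->|rl] := eqVneq r l; rewrite /=; ring.
have Duv : diff_coords u v = [set i; k] :|: [set j; l].
  apply/setP=> r; rewrite in_setU [r \in diff_coords u v]inE eq_sym -subr_eq0 dE.
  by case: ifP => // _; case: ifP; rewrite ?oppr_eq0 ?eqxx.
have card_uv : #|diff_coords u v| = 4%N.
  by rewrite Duv -!setUA !cardsU1 cards1 !inE !negb_or ij ik il jl kl ![k == _]eq_sym jk.
pose L := [seq move u p q al | p <- [:: i; k], q <- [:: j; l]].
apply: leq_trans (_ : #|L| <= 4)%N; last by rewrite (leq_trans (card_size _)) ?size_allpairs.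
have ST r : r \in diff_coords u v -> r \notin [set i; k] -> r \in [set j; l].
  by rewrite Duv in_setU => /orP[->|].
have mem_L p q : p \in [set i; k] -> q \in [set j; l] -> move u p q al \in L.
  move=> pS qT; apply: (@allpairs_f _ _ _ (fun p q => move u p q al));
    by rewrite !inE in pS qT *.
(* A common neighbour moves u from a coordinate r to a coordinate s with
   v_r - u_r = u_s - v_s, i.e. from {i, k} to {j, l}. *)
apply: subset_leq_card; apply/subsetP => w.
case/(diff4_common_nbr card_uv) => r [s [rs rD sD sum0 ->]].
move: sum0; rewrite !dE.
have [rS|/(ST r rD) rT] := boolP (r \in [set i; k]);
  have [sS|/(ST s sD) sT] := boolP (s \in [set i; k]) => /eqP.
- by rewrite (negbTE al2).
- by rewrite mem_L.
- by rewrite rT moveN mem_L.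
- by rewrite rT sT -opprD oppr_eq0 (negbTE al2).
Qed.

Lemma diff_coords_off_coset x q a b c al be :
  a != b -> c != a -> c != b -> al != 0 -> be != 0 -> be != al ->
  q = move x a c al \/ q = move x c b al -> diff_coords (move x a b be) q = [set a; b; c].
Proof.
move=> ab ca cb al0 be0 beal qE; apply/setP=> l; rewrite !inE.
have [ac bc ba] : [/\ a != c, b != c & b != a] by split; rewrite eq_sym.
have zx l' : (val (move x a b be) l' != val x l') = (l' == a) || (l' == b).
  exact: move_neq.
have [->|la] := eqVneq l a.
  case: qE => ->; first by rewrite !move_src // (inj_eq (addrI _)) beal.
  by rewrite (move_off _ _ ac ab) zx eqxx.
have [->|lb] := eqVneq l b.
  case: qE => ->; first by rewrite (move_off _ _ ba bc) zx eqxx !orbT.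
  by rewrite !move_dst // (inj_eq (addrI _)) (inj_eq oppr_inj) beal orbT.
have [->|lc] := eqVneq l c.
  by rewrite (move_off _ _ ca cb) eq_sym !orbT; case: qE => ->; rewrite move_neq ?eqxx ?orbT.
by case: qE => ->; rewrite !move_off ?eqxx ?(negbTE la) ?(negbTE lb) ?(negbTE lc).
Qed.

Lemma line_like_coset x a b al be : a != b -> al != 0 -> be != 0 -> be != al ->
  line_like x (move x a b al) (move x a b be).
Proof.
set y := move x a b al; set z := move x a b be => ab al0 be0 beal.
have zL : z \in csr_coset x a b by apply/csr_cosetP; exists be.
have off_coset q : csr_adj q x -> csr_adj q y -> q \notin csr_coset x a b ->
    exists c, [/\ c != a, c != b & diff_coords z q = [set a; b; c]].
  move=> qx qy /(common_nbr_off_coset ab al0 qx qy)[c [ca cb qE]].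
  by exists c; split; last exact: diff_coords_off_coset ab ca cb al0 be0 beal qE.
split=> [q qx qy qz qNz | q1 q2 q1x q1y q1z q2x q2y q2z q12].
  have qNL : q \notin csr_coset x a b.
    by apply: contra qNz => qL; apply: csr_coset_adj ab qL zL qz.
  have [c [ca cb Dzq]] := off_coset q qx qy qNL.
  by apply: card_common_nbrs_diff3 Dzq; rewrite // eq_sym.
have on_coset q : csr_adj q x -> csr_adj q y -> csr_adj q z -> q \in csr_coset x a b.
  move=> qx qy qz; apply: contraT => qNL; have [c [ca cb Dzq]] := off_coset q qx qy qNL.
  by move: qz; rewrite csr_adjC csr_adjE Dzq card_set3 // eq_sym.
exact: csr_coset_adj ab (on_coset _ q1x q1y q1z) (on_coset _ q2x q2y q2z) q12.
Qed.

Lemma not_line_like_bent x a b c al : (3 < m)%N -> a != b -> a != c -> b != c -> al != 0 ->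
  ~ line_like x (move x a b al) (move x a c al).
Proof.
set y := move x a b al; set z := move x a c al => m_gt3 ab ac bc al0 [many_nbrs nbrs_clique].
have [k /and3P[ka kb kc]] : exists k, [&& k != a, k != b & k != c].
  apply/existsP; apply: contraTT m_gt3 => /existsPn abc_full; rewrite -leqNgt.
  have /subset_leq_card : [set: 'I_m] \subset [set a; b; c].
    by apply/subsetP => l _; move: (abc_full l); rewrite !inE !negb_and !negbK orbA.
  by rewrite cardsT card_ord card_set3.
have [ba ca cb] : [/\ b != a, c != a & c != b] by split; rewrite eq_sym.
have [ak bk ck] : [/\ a != k, b != k & c != k] by split; rewrite eq_sym.
(* If 2 al = 0, then x + al (e_c - e_b) and x + al (e_a - e_k) break the clique
   condition; otherwise x + al (e_k - e_b) has too few neighbours in common with z. *)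
have [al2|al2] := eqVneq (al + al) 0.
- have alN : - al = al by apply/esym/eqP; rewrite -addr_eq0 al2.
  pose q1 := move x c b al; pose q2 := move x a k al.
  have q1y : q1 = move y c a al by rewrite /y moveC move_trans.
  have q1z : q1 = move z a b al by rewrite /z -[move x a c al]moveN alN move_trans.
  have [/negP q1Nq2 q12] : ~~ csr_adj q1 q2 /\ q1 != q2.
    apply: (not_adj_diff3 ab ac bc).
    + by rewrite (move_off _ _ ac ab) eq_sym move_neq ?eqxx.
    + by rewrite (move_off _ _ ba bk) move_neq ?eqxx ?orbT.
    + by rewrite (move_off _ _ ca ck) move_neq ?eqxx.
  apply/q1Nq2/nbrs_clique/q12.
  + exact: adj_move.
  + by rewrite q1y adj_move.
  + by rewrite q1z adj_move.
  + exact: adj_move.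
  + by rewrite /q2 -(move_trans x a b k al) adj_move.
  + by rewrite /q2 -(move_trans x a c k al) adj_move.
- pose q := move x k b al.
  have kby : move x k b al = move y k a al by rewrite /y moveC move_trans.
  have [qNz qz] : ~~ csr_adj q z /\ q != z.
    apply: (not_adj_diff3 ab ac bc).
    + by rewrite (move_off _ _ ak ab) eq_sym move_neq ?eqxx.
    + by rewrite (move_off _ _ ba bc) move_neq ?eqxx ?orbT.
    + by rewrite (move_off _ _ ck cb) eq_sym move_neq ?eqxx ?orbT.
  have qy : csr_adj q y by rewrite /q kby adj_move // eq_sym.
  have := many_nbrs q (adj_move x kb al0) qy qz qNz.
  suff -> : q = move (move z k b al) c a al by rewrite leqNgt ltnS card_common_nbrs_move2.
  by rewrite /z moveC move_trans move_id.
Qed.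

Lemma line_like_mem_coset x z a b al : (3 < m)%N -> a != b -> al != 0 ->
  csr_adj z x -> csr_adj z (move x a b al) -> line_like x (move x a b al) z ->
  z \in csr_coset x a b.
Proof.
move=> m_gt3 ab al0 zx zy zL; apply/negPn/negP => zNL.
have [c [ca cb [zE|zE]]] := common_nbr_off_coset ab al0 zx zy zNL; move: zL; rewrite zE.
  by apply: not_line_like_bent; rewrite // eq_sym.
rewrite -[move x a b al]moveN -[move x c b al]moveN.
by apply: not_line_like_bent; rewrite ?oppr_eq0 // eq_sym.
Qed.

End Lines.

Theorem lemma3 (m n : nat) (hm : (3 < m)%N) (hn : (3 < n)%N)
  (psi : csr_vertex m n -> csr_vertex m n) (hpsi : csr_automorphism psi)
  (xi : csr_vertex m n) (a b : 'I_m) (hab : a != b) :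
  exists (sigma : csr_vertex m n) (p q : 'I_m),
    p != q /\ psi @: csr_coset xi a b = csr_coset sigma p q.
Proof.
have [psi_bij psi_adj] := hpsi; have [phi psiK _] := psi_bij.
have one0 : 1 != 0 :> 'Z_n := oner_neq0 _.
set y := move xi a b 1.
have [p [q [be [pq be0 psi_y]]]] : exists p q be,
    [/\ p != q, be != 0 & psi y = move (psi xi) p q be].
  by apply: csr_adjP; rewrite psi_adj csr_adjC adj_move.
exists (psi xi), p, q; split => //.
suff sub : psi @: csr_coset xi a b \subset csr_coset (psi xi) p q.
  apply/eqP; rewrite eqEcard sub card_imset ?card_csr_coset ?leqnn //; exact: can_inj psiK.
apply/subsetP => _ /imsetP[_ /csr_cosetP[al ->] ->].
have [->|al0] := eqVneq al 0.
  by rewrite move0; apply/csr_cosetP; exists 0; rewrite move0.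
have [->|al1] := eqVneq al 1; first by rewrite -/y psi_y; apply/csr_cosetP; exists be.
apply: (line_like_mem_coset hm pq be0); rewrite -?psi_y.
- by rewrite psi_adj adj_move.
- by rewrite psi_adj /y -[al](subrKC 1) -moveD adj_move // subr_eq0.
- exact: line_like_iso psi_bij psi_adj (line_like_coset xi hab one0 al0 al1).
Qed.
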